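(* Let $N=2^n$ with $n\geq10$, and let $K,\Delta>0$. Let $\tilde h_v=h_v+\Delta$ for $v\in\Lambda_N$. Then, for any realization of the field for which the ground states below are unique, the following two conditions cannot hold simultaneously: (a) $d_{\mathcal C_*^{\Lambda_N}}(\partial\Lambda_{N/4},\partial\Lambda_{N/2})\geq K$; (b) $|\mathcal C_*^{\Lambda_N}\cap\Lambda_{N/4}|\cdot\Delta>\frac{8}{K}|\mathcal C_*^{\Lambda_N}\cap\mathcal A_{N/2}|$.
   Context: Let $\{h_v:v\in\mathbb Z^2\}$ be real numbers (in the paper, i.i.d. centered Gaussians with variance $\epsilon^2$, for which all ground states are unique a.s.). Write $u\sim v$ if $|u-v|_1=1$; $\partial A=\{v\in\mathbb Z^2\setminus A:u\sim v\text{ for some }u\in A\}$; $\Lambda_r=\{v\in\mathbb Z^2:|v|_\infty\le r\}$; $\mathcal A_M=\Lambda_M\setminus\Lambda_{M/2}$, so $\mathcal A_{N/2}=\Lambda_{N/2}\setminus\Lambda_{N/4}$. For a field $g$ on $\Lambda_N$ and $\sigma\in\{-1,1\}^{\Lambda_N}$, $H^{\Lambda_N,\pm}_g(\sigma)=-\big(\sum_{u\sim v,\,u,v\in\Lambda_N}\sigma_u\sigma_v\pm\sum_{u\sim v,\,u\in\Lambda_N,v\in\partial\Lambda_N}\sigma_u+\sum_{u\in\Lambda_N}\sigma_ug_u\big)$, and the ground states $\sigma^{\Lambda_N,\pm}$ (for $g=h$) and $\tilde\sigma^{\Lambda_N,\pm}$ (for $g=\tilde h$) are the minimizers. $\mathcal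 C^{\Lambda_N}=\{v:\sigma^{\Lambda_N,+}_v=1,\sigma^{\Lambda_N,-}_v=-1\}$, $\tilde{\mathcal C}^{\Lambda_N}=\{v:\tilde\sigma^{\Lambda_N,+}_v=1,\tilde\sigma^{\Lambda_N,-}_v=-1\}$, and $\mathcal C_*^{\Lambda_N}=\mathcal C^{\Lambda_N}\cap\tilde{\mathcal C}^{\Lambda_N}$. $d_A$ is the graph distance on the subgraph induced on $A$, and $d_A(A_1,A_2)=\min_{x\in A_1\cap A,y\in A_2\cap A}d_A(x,y)$ with $\min\emptyset=\infty$. *)

From Stdlib Require Import Bool Reals ZArith List Lia Lra.
Import ListNotations.
Open Scope R_scope.

Definition vtx := (Z * Z)%type.

Definition adj (u v : vtx) : Prop :=
  (Z.abs (fst u - fst v) + Z.abs (snd u - snd v) = 1)%Z.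

Definition inb (r : Z) (v : vtx) : bool :=
  ((Z.abs (fst v) <=? r) && (Z.abs (snd v) <=? r))%Z.
Definition Lam (r : Z) (v : vtx) : Prop := inb r v = true.

Definition bdry (A : vtx -> Prop) (v : vtx) : Prop :=
  ~ A v /\ exists u, A u /\ adj u v.

Definition zrange (a b : Z) : list Z :=
  map (fun k => (a + Z.of_nat k)%Z) (seq 0 (Z.to_nat (b - a + 1))).
Definition box (r : Z) : list vtx := list_prod (zrange (- r) r) (zrange (- r) r).

Definition rsum {A} (l : list A) (f : A -> R) : R :=
  fold_right (fun x acc => f x + acc) 0 l.

Definition vadd (u e : vtx) : vtx := (fst u + fst e, snd u + snd e)%Z.
Definition dirs_pos : list vtx := [(1, 0); (0, 1)]%Z.
Definition dirs4 : list vtx := [(1, 0); (-1, 0); (0, 1); (0, -1)]%Z.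

(* spin configurations: sigma : vtx -> Z, only values on Lambda_N matter *)
Definition spin_config (N : Z) (s : vtx -> Z) : Prop :=
  forall v, Lam N v -> s v = 1%Z \/ s v = (-1)%Z.

(* H^{Lambda_N, b}_g(sigma), b = +1 or -1 the boundary sign.
   Interaction: each unordered nearest-neighbour pair inside Lambda_N once.
   Boundary: each pair (u,v), u in Lambda_N, v in dLambda_N, u ~ v. *)
Definition Ham (N : Z) (b : R) (g : vtx -> R) (s : vtx -> Z) : R :=
  - ( rsum (box N) (fun u => rsum dirs_pos (fun e =>
          if inb N (vadd u e) then IZR (s u * s (vadd u e)) else 0))
    + b * rsum (box N) (fun u => rsum dirs4 (fun e =>
          if inb N (vadd u e) then 0 else IZR (s u)))
    + rsum (box N) (fun u => IZR (s u) * g u) ).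

Definition unique_ground_state (N : Z) (b : R) (g : vtx -> R) (s : vtx -> Z) : Prop :=
  spin_config N s /\
  (forall s', spin_config N s' -> Ham N b g s <= Ham N b g s') /\
  (forall s', spin_config N s' -> Ham N b g s' <= Ham N b g s ->
     forall v, Lam N v -> s' v = s v).

Inductive walk (A : vtx -> Prop) : vtx -> vtx -> nat -> Prop :=
| walk_nil : forall x, A x -> walk A x x 0
| walk_cons : forall x z y k, A x -> adj x z -> walk A z y k -> walk A x y (S k).

(* d_A(A1, A2) >= K, with d_A the graph distance of the subgraph induced on A,
   d_A(A1,A2) = min over x in A1 cap A, y in A2 cap A (min of empty set = oo) *)
Definition dist_ge (A A1 A2 : vtx -> Prop) (K : R) : Prop :=
  forall x y k, A1 x -> A2 y -> walk A x y k -> K <= INR k.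

Definition Cstarb (sp sm tp tm : vtx -> Z) (v : vtx) : bool :=
  (Z.eqb (sp v) 1 && Z.eqb (sm v) (-1) && Z.eqb (tp v) 1 && Z.eqb (tm v) (-1))%Z.
Definition Cstar (N : Z) (sp sm tp tm : vtx -> Z) (v : vtx) : Prop :=
  Lam N v /\ Cstarb sp sm tp tm v = true.

Definition card_in (N : Z) (P : vtx -> bool) : nat :=
  length (filter P (box N)).

From Stdlib Require Import Bool Reals ZArith List Lia Lra ClassicalEpsilon FinFun.
Import ListNotations.
Open Scope R_scope.

(* Fix j < K.  Let W_j be the set of vertices of C_* lying in Lambda_{N/4} or joined to
   its outer boundary by a walk in C_* of length < j, and L_j the vertices of C_* outside
   Lambda_{N/4} at C_*-distance exactly j from that boundary; by (a) both lie inside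
   Lambda_{N/2}.  Raise the minus ground state for the field h + Delta to +1 on W_j and
   lower the plus ground state for h to -1 on W_j.  The field energy drops by
   2 Delta |W_j| in total, and an edge costs energy only if it leaves W_j towards a vertex
   where sigma^+ = 1 and tilde-sigma^- = -1; by monotonicity of ground states in the field
   (a min/max exchange argument) such a vertex is in C_*, hence in L_j.  Minimality of the
   two ground states thus gives Delta |W_j| <= 8 |L_j|.  The layers L_0, L_1, ... up to
   ceil K - 1 are disjoint subsets of C_* cap A_{N/2} and each W_j contains
   C_* cap Lambda_{N/4}, so K Delta |C_* cap Lambda_{N/4}| <= 8 |C_* cap A_{N/2}|. *)

Section FiniteSums.
Context {A : Type}.
Implicit Types (l : list A) (f g : A -> R).

Lemma rsum_app l1 l2 f : rsum (l1 ++ l2) f = rsum l1 f + rsum l2 f.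
Proof. induction l1 as [|a l1 IH]; simpl; [lra|]. unfold rsum in *; simpl; rewrite IH; lra. Qed.

Lemma rsum_plus l f g : rsum l (fun x => f x + g x) = rsum l f + rsum l g.
Proof. induction l as [|a l IH]; unfold rsum in *; simpl; [lra|]. rewrite IH; lra. Qed.

Lemma rsum_minus l f g : rsum l (fun x => f x - g x) = rsum l f - rsum l g.
Proof. induction l as [|a l IH]; unfold rsum in *; simpl; [lra|]. rewrite IH; lra. Qed.

Lemma rsum_scal l c f : rsum l (fun x => c * f x) = c * rsum l f.
Proof. induction l as [|a l IH]; unfold rsum in *; simpl; [lra|]. rewrite IH; lra. Qed.

Lemma rsum_le l f g : (forall x, In x l -> f x <= g x) -> rsum l f <= rsum l g.
Proof.
  induction l as [|a l IH]; intros Hfg; unfold rsum in *; simpl; [lra|].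
  pose proof (Hfg a (in_eq a l)).
  pose proof (IH (fun x Hx => Hfg x (in_cons a x l Hx))). lra.
Qed.

Lemma rsum_ext l f g : (forall x, In x l -> f x = g x) -> rsum l f = rsum l g.
Proof. intros Hfg; apply Rle_antisym; apply rsum_le; intros x Hx; rewrite Hfg; auto; lra. Qed.

Lemma rsum_nonneg l f : (forall x, 0 <= f x) -> 0 <= rsum l f.
Proof.
  intros Hf; induction l as [|a l IH]; unfold rsum in *; simpl; [lra|]; specialize (Hf a); lra.
Qed.

Lemma rsum_incl_le l1 l2 f :
  NoDup l1 -> incl l1 l2 -> (forall x, 0 <= f x) -> rsum l1 f <= rsum l2 f.
Proof.
  intros Hnd; revert l2; induction Hnd as [|a l1 Ha Hnd IH]; intros l2 Hincl Hf.
  - apply rsum_nonneg, Hf.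
  - destruct (in_split a l2 (Hincl a (in_eq a l1))) as [p [q ->]].
    assert (Hpq : rsum l1 f <= rsum (p ++ q) f).
    { apply IH; auto. intros x Hx.
      destruct (in_app_or _ _ _ (Hincl x (in_cons a x l1 Hx))) as [Hp | [<- | Hq]];
        auto using in_or_app; contradiction. }
    rewrite rsum_app in *; unfold rsum in *; simpl; lra.
Qed.

End FiniteSums.

Definition ind (P : Prop) : R := if excluded_middle_informative P then 1 else 0.

Lemma ind_true (P : Prop) : P -> ind P = 1.
Proof. unfold ind; destruct excluded_middle_informative; tauto. Qed.

Lemma ind_false (P : Prop) : ~ P -> ind P = 0.
Proof. unfold ind; destruct excluded_middle_informative; tauto. Qed.

Lemma ind_ge0 (P : Prop) : 0 <= ind P.
Proof. unfold ind; destruct excluded_middle_informative; lra. Qed.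

Lemma ind_mono (P Q : Prop) : (P -> Q) -> ind P <= ind Q.
Proof.
  intros HPQ; unfold ind.
  destruct (excluded_middle_informative P), (excluded_middle_informative Q); tauto || lra.
Qed.

Lemma ind_ext (P Q : Prop) : (P <-> Q) -> ind P = ind Q.
Proof. intros HPQ; apply Rle_antisym; apply ind_mono; apply HPQ. Qed.

Lemma ind_split (P Q : Prop) : (Q -> P) -> ind P = ind (P /\ ~ Q) + ind Q.
Proof.
  intros HQP; unfold ind.
  destruct (excluded_middle_informative P), (excluded_middle_informative Q),
    (excluded_middle_informative (P /\ ~ Q)); tauto || lra.
Qed.

Lemma INR_length_filter {A} (l : list A) (P : A -> bool) :
  INR (length (filter P l)) = rsum l (fun x => ind (P x = true)).
Proof.
  induction l as [|a l IH]; unfold rsum in *; simpl; [reflexivity|].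
  destruct (P a) eqn:Ha; [rewrite ind_true by reflexivity | rewrite ind_false by congruence];
    simpl length; rewrite <- IH; [rewrite S_INR|]; lra.
Qed.

Lemma in_zrange a b z : In z (zrange a b) <-> (a <= z <= b)%Z.
Proof.
  unfold zrange; rewrite in_map_iff; split.
  - intros [k [<- Hk]]; apply in_seq in Hk; lia.
  - intros Hz; exists (Z.to_nat (z - a)); split; [lia|]; apply in_seq; lia.
Qed.

Lemma NoDup_zrange a b : NoDup (zrange a b).
Proof. apply Injective_map_NoDup; [intros x y Hxy; lia | apply seq_NoDup]. Qed.

Lemma NoDup_list_prod {A B} (l1 : list A) (l2 : list B) :
  NoDup l1 -> NoDup l2 -> NoDup (list_prod l1 l2).
Proof.
  intros H1 H2; induction H1 as [|a l1 Ha H1 IH]; simpl; [constructor|].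
  apply NoDup_app; auto.
  - apply Injective_map_NoDup; auto. intros x y Hxy; now inversion Hxy.
  - intros [x y] Hx Hy. apply in_map_iff in Hx as [z [Hz _]]. inversion Hz; subst.
    apply in_prod_iff in Hy; tauto.
Qed.

Lemma in_box N v : In v (box N) <-> Lam N v.
Proof.
  destruct v as [x y]; unfold box, Lam, inb; simpl.
  rewrite (in_prod_iff (zrange (- N) N) (zrange (- N) N) x y), !in_zrange,
    andb_true_iff, !Z.leb_le; lia.
Qed.

Lemma NoDup_box N : NoDup (box N).
Proof. apply NoDup_list_prod; apply NoDup_zrange. Qed.

Definition size_in (N : Z) (P : vtx -> Prop) : R := rsum (box N) (fun v => ind (P v)).

Lemma size_in_ge0 N P : 0 <= size_in N P.
Proof. apply rsum_nonneg; intros; apply ind_ge0. Qed.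

Lemma size_in_le N (P Q : vtx -> Prop) :
  (forall v, Lam N v -> P v -> Q v) -> size_in N P <= size_in N Q.
Proof. intros HPQ; apply rsum_le; intros v Hv%in_box; apply ind_mono; auto. Qed.

Lemma size_in_ext N (P Q : vtx -> Prop) :
  (forall v, Lam N v -> P v <-> Q v) -> size_in N P = size_in N Q.
Proof. intros HPQ; apply Rle_antisym; apply size_in_le; apply HPQ. Qed.

Lemma INR_card_in N P : INR (card_in N P) = size_in N (fun v => P v = true).
Proof. apply INR_length_filter. Qed.

Lemma rsum_shift_le N e f : (forall x, 0 <= f x) ->
  rsum (box N) (fun u => if inb N (vadd u e) then f (vadd u e) else 0) <= rsum (box N) f.
Proof.
  intros Hf.
  replace (rsum (box N) _) with (rsum (filter (inb N) (map (fun u => vadd u e) (box N))) f).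
  - apply rsum_incl_le; auto.
    + apply NoDup_filter, Injective_map_NoDup; [|apply NoDup_box].
      intros [a b] [c d]; unfold vadd; simpl; intros Heq; inversion Heq; f_equal; lia.
    + intros x Hx%filter_In; apply in_box, Hx.
  - induction (box N) as [|u l IH]; unfold rsum in *; simpl; auto.
    destruct (inb N (vadd u e)); simpl; rewrite IH; lra.
Qed.

Lemma adj_sym u v : adj u v -> adj v u.
Proof. unfold adj; lia. Qed.

Lemma adj_vadd u e : In e dirs4 -> adj u (vadd u e).
Proof. unfold adj, vadd; simpl; intros [<-|[<-|[<-|[<-|[]]]]]; simpl; lia. Qed.

Lemma Lam_mono r r' v : (r <= r')%Z -> Lam r v -> Lam r' v.
Proof. unfold Lam, inb; rewrite !andb_true_iff, !Z.leb_le; lia. Qed.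

Lemma Lam_adj r u v : adj u v -> Lam r u -> Lam (r + 1) v.
Proof. unfold adj, Lam, inb; rewrite !andb_true_iff, !Z.leb_le; lia. Qed.

Lemma Lam_bdry r v : bdry (Lam r) v -> Lam (r + 1) v.
Proof. intros [_ [u [Hu Huv]]]; eapply Lam_adj; eauto. Qed.

Lemma walk_start A x y k : walk A x y k -> A x.
Proof. now intros []. Qed.

Lemma walk_snoc A x y z k : walk A x y k -> adj y z -> A z -> walk A x z (S k).
Proof.
  induction 1 as [x Hx|x w y k Hx Hxw Hw IH]; intros Hyz Hz.
  - apply walk_cons with z; auto using walk_nil.
  - apply walk_cons with w; auto.
Qed.

Lemma walk_exit A (B : vtx -> Prop) x y k : walk A x y k -> B x -> ~ B y ->
  exists z k', (k' <= k)%nat /\ walk A x z k' /\ bdry B z.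
Proof.
  induction 1 as [x Hx|x w y k Hx Hxw Hw IH]; intros Bx By; [tauto|].
  destruct (excluded_middle_informative (B w)) as [Bw|Bw].
  - destruct (IH Bw By) as [z [k' [Hk [Hw' Hz]]]].
    exists z, (S k'); split; [lia|]; split; [apply walk_cons with w|]; auto.
  - exists w, 1%nat; split; [lia|]; split; [|split; [|exists x]; auto].
    apply walk_cons with w; auto. exact (walk_nil _ _ (walk_start _ _ _ _ Hw)).
Qed.

Definition pair_energy (N : Z) (s : vtx -> Z) : R :=
  rsum (box N) (fun u => rsum dirs_pos (fun e =>
    if inb N (vadd u e) then IZR (s u * s (vadd u e)) else 0)).

Definition boundary_energy (N : Z) (s : vtx -> Z) : R :=
  rsum (box N) (fun u => rsum dirs4 (fun e => if inb N (vadd u e) then 0 else IZR (s u))).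

Definition field_energy (N : Z) (g : vtx -> R) (s : vtx -> Z) : R :=
  rsum (box N) (fun u => IZR (s u) * g u).

Lemma Ham_split N b g s :
  Ham N b g s = - (pair_energy N s + b * boundary_energy N s + field_energy N g s).
Proof. reflexivity. Qed.

Definition is_spin (z : Z) : Prop := z = 1%Z \/ z = (-1)%Z.

Definition zmin (a c : vtx -> Z) (v : vtx) : Z := Z.min (a v) (c v).
Definition zmax (a c : vtx -> Z) (v : vtx) : Z := Z.max (a v) (c v).

Lemma is_spin_min x y : is_spin x -> is_spin y -> is_spin (Z.min x y).
Proof. intros [-> | ->] [-> | ->]; cbn; unfold is_spin; auto. Qed.

Lemma is_spin_max x y : is_spin x -> is_spin y -> is_spin (Z.max x y).
Proof. intros [-> | ->] [-> | ->]; cbn; unfold is_spin; auto. Qed.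

Lemma spin_pair_min_max x y x' y' : is_spin x -> is_spin y -> is_spin x' -> is_spin y' ->
  IZR (x * y) + IZR (x' * y') <= IZR (Z.min x x' * Z.min y y') + IZR (Z.max x x' * Z.max y y').
Proof. intros [-> | ->] [-> | ->] [-> | ->] [-> | ->]; cbn; lra. Qed.

Lemma field_min_max (x x' : Z) (g g' : R) : g <= g' ->
  IZR x * g + IZR x' * g' <= IZR (Z.min x x') * g + IZR (Z.max x x') * g'.
Proof.
  intros Hg; destruct (Z.le_ge_cases x x') as [Hx|Hx].
  - rewrite Z.min_l, Z.max_r by exact Hx; lra.
  - rewrite Z.min_r, Z.max_l by exact Hx. apply IZR_le in Hx. nra.
Qed.

Lemma Ham_min_max N b g g' a c : spin_config N a -> spin_config N c ->
  (forall v, g v <= g' v) ->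
  Ham N b g (zmin a c) + Ham N b g' (zmax a c) <= Ham N b g a + Ham N b g' c.
Proof.
  intros Sa Sc Hg; rewrite !Ham_split.
  assert (Hpair : pair_energy N a + pair_energy N c
                  <= pair_energy N (zmin a c) + pair_energy N (zmax a c)).
  { unfold pair_energy; rewrite <- !rsum_plus; apply rsum_le; intros u Hu%in_box.
    rewrite <- !rsum_plus; apply rsum_le; intros e _.
    destruct (inb N (vadd u e)) eqn:Hv; [|lra].
    apply spin_pair_min_max; [apply Sa | apply Sa | apply Sc | apply Sc]; auto. }
  assert (Hbdry : boundary_energy N (zmin a c) + boundary_energy N (zmax a c)
                  = boundary_energy N a + boundary_energy N c).
  { unfold boundary_energy; rewrite <- !rsum_plus; apply rsum_ext; intros u _.
    rewrite <- !rsum_plus; apply rsum_ext; intros e _.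
    destruct (inb N (vadd u e)); [lra|].
    unfold zmin, zmax; destruct (Z.le_ge_cases (a u) (c u)) as [H|H];
      [rewrite Z.min_l, Z.max_r | rewrite Z.min_r, Z.max_l]; auto; lra. }
  assert (Hfield : field_energy N g a + field_energy N g' c
                   <= field_energy N g (zmin a c) + field_energy N g' (zmax a c)).
  { unfold field_energy; rewrite <- !rsum_plus; apply rsum_le; intros u _.
    apply field_min_max, Hg. }
  assert (Hbdry_b : b * boundary_energy N (zmin a c) + b * boundary_energy N (zmax a c)
                    = b * boundary_energy N a + b * boundary_energy N c).
  { rewrite <- !Rmult_plus_distr_l, Hbdry; reflexivity. }
  lra.
Qed.

Lemma ground_state_monotone N b g g' a c :
  unique_ground_state N b g a -> unique_ground_state N b g' c ->
  (forall v, g v <= g' v) -> forall v, Lam N v -> (a v <= c v)%Z.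
Proof.
  intros [Sa [Ma Ua]] [Sc [Mc _]] Hg v Hv.
  assert (Smin : spin_config N (zmin a c))
    by (intros w Hw; apply is_spin_min; [apply Sa | apply Sc]; auto).
  assert (Smax : spin_config N (zmax a c))
    by (intros w Hw; apply is_spin_max; [apply Sa | apply Sc]; auto).
  pose proof (Ham_min_max N b g g' a c Sa Sc Hg).
  pose proof (Ma _ Smin); pose proof (Mc _ Smax).
  assert (Hmin : zmin a c v = a v) by (apply Ua; auto; lra).
  unfold zmin in Hmin; lia.
Qed.

Section Layers.
Variables (C : vtx -> Prop) (r : Z).

(* [hull j] and [layer j] are the sets W_j and L_j of the proof idea. *)

Definition reach (j : nat) (v : vtx) : Prop :=
  exists x k, bdry (Lam r) x /\ walk C x v k /\ (k < j)%nat.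

Definition hull (j : nat) (v : vtx) : Prop := C v /\ (Lam r v \/ reach j v).

Definition layer (j : nat) (v : vtx) : Prop :=
  C v /\ ~ Lam r v /\ (exists x, bdry (Lam r) x /\ walk C x v j) /\ ~ reach j v.

Lemma layer_of_hull_adj j u v : hull j u -> adj u v -> C v -> ~ hull j v -> layer j v.
Proof.
  intros [Cu Hu] Huv Cv Hv.
  assert (Hvr : ~ Lam r v) by (intros H; apply Hv; split; auto).
  assert (Hvj : ~ reach j v) by (intros H; apply Hv; split; auto).
  repeat split; auto.
  destruct Hu as [Hu | [x [k [Hx [Hw Hk]]]]].
  - assert (Hvb : bdry (Lam r) v) by (split; auto; exists u; auto).
    destruct j as [|j].
    + exists v; split; auto using walk_nil.
    + exfalso; apply Hvj; exists v, 0%nat; auto using walk_nil with arith.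
  - destruct (Nat.eq_dec (S k) j) as [<- | Hne].
    + exists x; split; auto; eapply walk_snoc; eauto.
    + exfalso; apply Hvj; exists x, (S k); split; [|split; [eapply walk_snoc|]]; eauto; lia.
Qed.

Lemma layer_unique i j v : layer i v -> layer j v -> i = j.
Proof.
  intros [_ [_ [[x [Hx Hxv]] Hi]]] [_ [_ [[y [Hy Hyv]] Hj]]].
  destruct (Nat.lt_total i j) as [Hij | [Hij | Hij]]; auto; exfalso.
  - apply Hj; exists x, i; auto.
  - apply Hi; exists y, j; auto.
Qed.

Variables (r' : Z) (K : R).
Hypothesis r_lt_r' : (r + 1 <= r')%Z.
Hypothesis dist_K : dist_ge C (bdry (Lam r)) (bdry (Lam r')) K.

Lemma short_walk_inside x v k : bdry (Lam r) x -> walk C x v k -> INR k < K -> Lam r' v.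
Proof.
  intros Hx Hw Hk; destruct (excluded_middle_informative (Lam r' v)) as [|Hv]; auto.
  assert (Hx' : Lam r' x) by (eapply Lam_mono, Lam_bdry, Hx; exact r_lt_r').
  destruct (walk_exit _ _ _ _ _ Hw Hx' Hv) as [y [k' [Hk' [Hw' Hy]]]].
  pose proof (dist_K x y k' Hx Hy Hw'); apply le_INR in Hk'; lra.
Qed.

Lemma hull_inside j v : INR j < K -> hull j v -> Lam r' v.
Proof.
  intros Hj [_ [Hv | [x [k [Hx [Hw Hk]]]]]].
  - eapply Lam_mono; [|exact Hv]; lia.
  - apply lt_INR in Hk; eapply short_walk_inside; eauto; lra.
Qed.

Lemma layer_inside j v : INR j < K -> layer j v -> Lam r' v.
Proof. intros Hj [_ [_ [[x [Hx Hw]] _]]]; eapply short_walk_inside; eauto. Qed.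

End Layers.

Definition flip_on (W : vtx -> Prop) (z : Z) (s : vtx -> Z) (v : vtx) : Z :=
  if excluded_middle_informative (W v) then z else s v.

Lemma flip_on_spin N W z s : is_spin z -> spin_config N s -> spin_config N (flip_on W z s).
Proof. intros Hz Hs v Hv; unfold flip_on; destruct excluded_middle_informative; auto. Qed.

Lemma boundary_energy_flip N W z s :
  (forall u e, W u -> In e dirs4 -> Lam N (vadd u e)) ->
  boundary_energy N (flip_on W z s) = boundary_energy N s.
Proof.
  intros HW; unfold boundary_energy; apply rsum_ext; intros u _; apply rsum_ext; intros e He.
  destruct (inb N (vadd u e)) eqn:Hv; auto.
  unfold flip_on; destruct excluded_middle_informative as [Wu|]; auto.
  specialize (HW u e Wu He); unfold Lam in HW; congruence.
Qed.

Lemma rsum_dirs_pos (f : vtx -> R) : rsum dirs_pos f = f (1, 0)%Z + f (0, 1)%Z.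
Proof. unfold rsum; simpl; ring. Qed.

Lemma exists_least_nat_ge (K : R) : exists m, K <= INR m /\ forall j, (j < m)%nat -> INR j < K.
Proof.
  assert (Hup : exists m, K <= INR m).
  { destruct (archimed K) as [HK _]; exists (Z.to_nat (up K)).
    destruct (Z.le_ge_cases (up K) 0) as [Hneg | Hpos].
    - apply IZR_le in Hneg; pose proof (pos_INR (Z.to_nat (up K))); lra.
    - rewrite INR_IZR_INZ, Z2Nat.id by lia; lra. }
  destruct Hup as [m Hm]; induction m as [|m IH].
  - exists 0%nat; split; auto; intros; lia.
  - destruct (Rle_lt_dec K (INR m)) as [Hle | Hlt]; auto.
    exists (S m); split; auto; intros j Hj.
    assert (INR j <= INR m) by (apply le_INR; lia); lra.
Qed.

Section Peeling.
Variables (N r r' : Z) (K Delta : R) (h : vtx -> R) (sp sm tp tm : vtx -> Z).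
Local Notation C := (Cstar N sp sm tp tm).
Local Notation ht := (fun v => h v + Delta).
Hypotheses (r_lt_r' : (r + 1 <= r')%Z) (r'_lt_N : (r' + 1 <= N)%Z) (Delta_ge0 : 0 <= Delta).
Hypotheses (Gsp : unique_ground_state N 1 h sp) (Gsm : unique_ground_state N (-1) h sm)
  (Gtp : unique_ground_state N 1 ht tp) (Gtm : unique_ground_state N (-1) ht tm).
Hypothesis dist_K : dist_ge C (bdry (Lam r)) (bdry (Lam r')) K.

Lemma Cstar_sp_tm v : C v -> sp v = 1%Z /\ tm v = (-1)%Z.
Proof. unfold Cstar, Cstarb; rewrite !andb_true_iff, !Z.eqb_eq; tauto. Qed.

Lemma Cstar_of_sp_tm v : Lam N v -> sp v = 1%Z -> tm v = (-1)%Z -> C v.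
Proof.
  intros Hv Hsp Htm.
  pose proof (ground_state_monotone N (-1) h ht sm tm Gsm Gtm ltac:(intros; lra) v Hv).
  pose proof (ground_state_monotone N 1 h ht sp tp Gsp Gtp ltac:(intros; lra) v Hv).
  destruct (proj1 Gsm v Hv), (proj1 Gtp v Hv); try lia.
  split; auto; unfold Cstarb; rewrite !andb_true_iff, !Z.eqb_eq; lia.
Qed.

Section Flip.
Variable j : nat.
Hypothesis j_lt_K : INR j < K.
Local Notation W := (hull C r j).
Local Notation L := (layer C r j).
Local Notation up := (flip_on W 1 tm).
Local Notation down := (flip_on W (-1) sp).

Lemma crossing_cost u v : W u -> ~ W v -> adj u v -> Lam N v ->
  IZR (sp v) - IZR (tm v) <= 2 * ind (L v).
Proof.
  intros Wu Wv Huv Hv; pose proof (ind_ge0 (L v)).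
  destruct (proj1 Gsp v Hv) as [Hs | Hs], (proj1 Gtm v Hv) as [Ht | Ht]; rewrite Hs, Ht; try lra.
  rewrite ind_true; [lra|].
  apply layer_of_hull_adj with u; auto using Cstar_of_sp_tm.
Qed.

Lemma flip_edge_cost u v : Lam N u -> Lam N v -> adj u v ->
  IZR (tm u * tm v) - IZR (up u * up v) + IZR (sp u * sp v) - IZR (down u * down v)
  <= 4 * (ind (L u) + ind (L v)).
Proof.
  intros Hu Hv Huv; pose proof (ind_ge0 (L u)); pose proof (ind_ge0 (L v)).
  unfold flip_on; rewrite !mult_IZR.
  destruct (excluded_middle_informative (W u)) as [Wu | Wu],
    (excluded_middle_informative (W v)) as [Wv | Wv].
  - destruct (Cstar_sp_tm u (proj1 Wu)) as [-> ->], (Cstar_sp_tm v (proj1 Wv)) as [-> ->]; lra.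
  - destruct (Cstar_sp_tm u (proj1 Wu)) as [-> ->].
    pose proof (crossing_cost u v Wu Wv Huv Hv); lra.
  - destruct (Cstar_sp_tm v (proj1 Wv)) as [-> ->].
    pose proof (crossing_cost v u Wv Wu (adj_sym u v Huv) Hu); lra.
  - lra.
Qed.

(* The edge {u, u + e} is charged to its endpoint u + e here and to u in [ind (L u)]. *)
Definition layer_shift (e : vtx) (u : vtx) : R :=
  if inb N (vadd u e) then ind (L (vadd u e)) else 0.

Lemma flip_pair_cost u e : Lam N u -> In e dirs4 ->
  (if inb N (vadd u e) then IZR (tm u * tm (vadd u e)) else 0)
  - (if inb N (vadd u e) then IZR (up u * up (vadd u e)) else 0)
  + (if inb N (vadd u e) then IZR (sp u * sp (vadd u e)) else 0)
  - (if inb N (vadd u e) then IZR (down u * down (vadd u e)) else 0)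
  <= 4 * ind (L u) + 4 * layer_shift e u.
Proof.
  intros Hu He; unfold layer_shift; pose proof (ind_ge0 (L u)).
  destruct (inb N (vadd u e)) eqn:Hv; [|lra].
  pose proof (flip_edge_cost u (vadd u e) Hu Hv (adj_vadd u e He)); lra.
Qed.

Lemma pair_energy_flip :
  pair_energy N tm - pair_energy N up + pair_energy N sp - pair_energy N down
  <= 16 * size_in N L.
Proof.
  assert (Hshift : forall e, rsum (box N) (layer_shift e) <= size_in N L).
  { intros e; apply (rsum_shift_le N e (fun v => ind (L v))); intros; apply ind_ge0. }
  transitivity (rsum (box N) (fun u =>
    8 * ind (L u) + 4 * layer_shift (1, 0)%Z u + 4 * layer_shift (0, 1)%Z u)).
  - unfold pair_energy; rewrite <- rsum_minus, <- rsum_plus, <- rsum_minus.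
    apply rsum_le; intros u Hu%in_box; rewrite !rsum_dirs_pos; cbv beta.
    pose proof (flip_pair_cost u (1, 0)%Z Hu ltac:(simpl; auto)).
    pose proof (flip_pair_cost u (0, 1)%Z Hu ltac:(simpl; auto)).
    lra.
  - rewrite !rsum_plus, !rsum_scal; fold (size_in N L).
    pose proof (Hshift (1, 0)%Z); pose proof (Hshift (0, 1)%Z); lra.
Qed.

Lemma field_energy_flip :
  field_energy N ht up - field_energy N ht tm + field_energy N h down - field_energy N h sp
  = 2 * Delta * size_in N W.
Proof.
  unfold field_energy, size_in.
  rewrite <- rsum_minus, <- rsum_plus, <- rsum_minus, <- rsum_scal.
  apply rsum_ext; intros u _; unfold flip_on.
  destruct (excluded_middle_informative (W u)) as [Wu | Wu].
  - rewrite ind_true by exact Wu; destruct (Cstar_sp_tm u (proj1 Wu)) as [-> ->]; lra.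
  - rewrite ind_false by exact Wu; lra.
Qed.

Lemma hull_layer_bound : Delta * size_in N W <= 8 * size_in N L.
Proof.
  assert (Hnbr : forall u e, W u -> In e dirs4 -> Lam N (vadd u e)).
  { intros u e Wu He; apply Lam_mono with (r' + 1)%Z; [lia|].
    apply Lam_adj with u; [apply adj_vadd, He|]; eapply hull_inside; eauto. }
  pose proof (proj1 (proj2 Gtm) up (flip_on_spin N W 1 tm (or_introl eq_refl) (proj1 Gtm))).
  pose proof (proj1 (proj2 Gsp) down (flip_on_spin N W (-1) sp (or_intror eq_refl) (proj1 Gsp))).
  rewrite !Ham_split, !boundary_energy_flip in * by exact Hnbr.
  pose proof pair_energy_flip; pose proof field_energy_flip; lra.
Qed.

End Flip.

Definition unpeeled (m : nat) (v : vtx) : Prop :=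
  C v /\ Lam r' v /\ ~ Lam r v /\ forall j, (j < m)%nat -> ~ layer C r j v.

Lemma size_unpeeled_S m : INR m < K ->
  size_in N (unpeeled m) = size_in N (unpeeled (S m)) + size_in N (layer C r m).
Proof.
  intros Hm; unfold size_in; rewrite <- rsum_plus; apply rsum_ext; intros v _.
  rewrite (ind_split (unpeeled m v) (layer C r m v)); f_equal.
  - apply ind_ext; unfold unpeeled; split.
    + intros [[Cv [Hr' [Hr Hj]]] Hm']; refine (conj Cv (conj Hr' (conj Hr _))).
      intros j Hj'; destruct (Nat.eq_dec j m) as [-> | Hne]; auto; apply Hj; lia.
    + intros [Cv [Hr' [Hr Hj]]]; split; [refine (conj Cv (conj Hr' (conj Hr _)))|]; auto.
  - intros Lv; pose proof Lv as [Cv [Hr _]]; refine (conj Cv (conj _ (conj Hr _))).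
    + eapply layer_inside; eauto.
    + intros j Hj Lj; pose proof (layer_unique _ _ _ _ _ Lj Lv); lia.
Qed.

Lemma peel_layers m : (forall j, (j < m)%nat -> INR j < K) ->
  INR m * (Delta * size_in N (fun v => C v /\ Lam r v)) + 8 * size_in N (unpeeled m)
  <= 8 * size_in N (unpeeled 0).
Proof.
  induction m as [|m IH]; intros Hm; [simpl; lra|].
  assert (Hm' : INR m < K) by (apply Hm; lia).
  specialize (IH (fun j Hj => Hm j ltac:(lia))).
  assert (Hcore : size_in N (fun v => C v /\ Lam r v) <= size_in N (hull C r m)).
  { apply size_in_le; intros v _ [Cv Hv]; split; auto. }
  pose proof (hull_layer_bound m Hm').
  pose proof (Rmult_le_compat_l _ _ _ Delta_ge0 Hcore).
  rewrite size_unpeeled_S in IH by exact Hm'; rewrite S_INR; lra.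
Qed.

Lemma peeling_bound :
  K * (Delta * size_in N (fun v => C v /\ Lam r v))
  <= 8 * size_in N (fun v => C v /\ Lam r' v /\ ~ Lam r v).
Proof.
  destruct (exists_least_nat_ge K) as [m [HKm Hm]].
  pose proof (peel_layers m Hm); pose proof (size_in_ge0 N (unpeeled m)).
  assert (Hstart : size_in N (unpeeled 0) = size_in N (fun v => C v /\ Lam r' v /\ ~ Lam r v)).
  { apply size_in_ext; intros v _; unfold unpeeled; split; [tauto|].
    intros [Cv [Hr' Hr]]; refine (conj Cv (conj Hr' (conj Hr _))); intros j Hj; lia. }
  assert (Hcore : 0 <= Delta * size_in N (fun v => C v /\ Lam r v))
    by (apply Rmult_le_pos; auto using size_in_ge0).
  pose proof (Rmult_le_compat_r _ _ _ Hcore HKm); lra.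
Qed.

End Peeling.

Lemma card_Cstar_core N r sp sm tp tm :
  INR (card_in N (fun v => Cstarb sp sm tp tm v && inb r v))
  = size_in N (fun v => Cstar N sp sm tp tm v /\ Lam r v).
Proof.
  rewrite INR_card_in; apply size_in_ext; intros v Hv.
  unfold Cstar, Lam in *; rewrite andb_true_iff; tauto.
Qed.

Lemma card_Cstar_annulus N r r' sp sm tp tm :
  INR (card_in N (fun v => Cstarb sp sm tp tm v && inb r' v && negb (inb r v)))
  = size_in N (fun v => Cstar N sp sm tp tm v /\ Lam r' v /\ ~ Lam r v).
Proof.
  rewrite INR_card_in; apply size_in_ext; intros v Hv.
  unfold Cstar, Lam in *; rewrite !andb_true_iff, negb_true_iff, not_true_iff_false; tauto.
Qed.

Lemma quarter_half_bounds (N : Z) : (4 <= N)%Z -> (N / 4 + 1 <= N / 2)%Z /\ (N / 2 + 1 <= N)%Z.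
Proof.
  intros HN.
  pose proof (Z.div_mod N 4 ltac:(lia)); pose proof (Z.mod_pos_bound N 4 ltac:(lia)).
  pose proof (Z.div_mod N 2 ltac:(lia)); pose proof (Z.mod_pos_bound N 2 ltac:(lia)).
  lia.
Qed.

Theorem lemma2p4 (n : nat) (K Delta : R) (h : vtx -> R)
  (sp sm tp tm : vtx -> Z) :
  (10 <= n)%nat -> 0 < K -> 0 < Delta ->
  let N := (2 ^ Z.of_nat n)%Z in
  let ht := fun v => h v + Delta in
  unique_ground_state N 1 h sp ->
  unique_ground_state N (-1) h sm ->
  unique_ground_state N 1 ht tp ->
  unique_ground_state N (-1) ht tm ->
  ~ ( dist_ge (Cstar N sp sm tp tm) (bdry (Lam (N / 4))) (bdry (Lam (N / 2))) K
      /\ INR (card_in N (fun v => Cstarb sp sm tp tm v && inb (N / 4) v)) * Delta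
         > 8 / K * INR (card_in N (fun v => Cstarb sp sm tp tm v
                                    && inb (N / 2) v && negb (inb (N / 4) v))) ).
Proof.
  intros Hn HK HD N ht Gsp Gsm Gtp Gtm [Hdist Hcard].
  assert (HN : (4 <= N)%Z) by (apply (Z.pow_le_mono_r 2 2); lia).
  destruct (quarter_half_bounds N HN) as [Hq Hh].
  pose proof (peeling_bound N (N / 4) (N / 2) K Delta h sp sm tp tm Hq Hh
                (Rlt_le _ _ HD) Gsp Gsm Gtp Gtm Hdist) as Hpeel.
  rewrite card_Cstar_core, card_Cstar_annulus in Hcard.
  apply (Rmult_gt_compat_r K) in Hcard; [|exact HK].
  replace (8 / K * _ * K) with (8 * size_in N (fun v => Cstar N sp sm tp tm v
                                  /\ Lam (N / 2) v /\ ~ Lam (N / 4) v))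
    in Hcard by (field; lra).
  lra.
Qed.
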